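(* Let $P$ be a finite graded poset with $\hat0$ and let $\lambda$ be an ER-labeling of $P$ satisfying the rank two switching property and the braid relation. Then for every interval $[x,y]$ of $P$, each connected component of the graph $G_{[x,y]}$ contains a unique sink, i.e., a unique ascent-free maximal chain of $[x,y]$.
   Context: An E-labeling of $P$ is a map $\lambda$ from the set of cover relations $x\lessdot y$ of $P$ to a poset $\Lambda$. The word of labels of a saturated chain $x_0\lessdot x_1\lessdot\cdots\lessdot x_\ell$ is $\lambda(x_0\lessdot x_1)\cdots\lambda(x_{\ell-1}\lessdot x_\ell)$; the chain is increasing if this word is strictly increasing in $\Lambda$, and ascent-free if there is no $i$ with $\lambda(x_{i-1}\lessdot x_i)<\lambda(x_i\lessdot x_{i+1})$. $\lambda$ is an ER-labeling if every closed interval has exactly one increasing maximal chain. $\lambda$ has the rank two switching property if for every saturated chain $\hat0=x_0\lessdot\cdots\lessdot x_k$ and every $i$ with $\lambda(x_{i-1}\lessdot x_i)<\lambda(x_i\lessdot x_{i+1})$ there is a unique element $x_i'$ with $x_{i-1}\lessdot x_i'\lessdot x_{i+1}$, $\lambda(x_{i-1}\lessdot x_i')=\lambda(x_i\lessdot x_{i+1})$ and $\lambda(x_i'\lessdot x_{i+1})=\lambda(x_{i-1}\lessdot x_i)$. For a maximal chain $\mathbf c$ of an interval $[x,y]$ with an ascent at rank position $i$, the quadratic exchange $U_i(\mathbf c)$ replaces $x_i$ by this $x_i'$; if there is no ascent at position $i$, $U_i(\mathbf c)=\mathbf c$. $G_{[x,y]}$ is the directed graph on the maximal chains of $[x,y]$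 with an edge $\mathbf c\to U_i(\mathbf c)$ whenever $U_i(\mathbf c)\neq\mathbf c$; a sink is a vertex of outdegree $0$. The braid relation holds if for every maximal chain $\mathbf c$ of any interval with $\lambda(x_{i-1}\lessdot x_i)<\lambda(x_i\lessdot x_{i+1})<\lambda(x_{i+1}\lessdot x_{i+2})$ we have $U_iU_{i+1}U_i(\mathbf c)=U_{i+1}U_iU_{i+1}(\mathbf c)$. *)

From mathcomp Require Import all_boot all_order.
From Stdlib Require Import Relations.
Set Implicit Arguments. Unset Strict Implicit. Unset Printing Implicit Defensive.
Import Order.TTheory.
Local Open Scope order_scope.

Section Labelings.
Context {d : Order.disp_t} {P : finBPOrderType d}.
Context {dL : Order.disp_t} {L : porderType dL}.

Definition cover (x y : P) : bool :=
  (x < y) && [forall z : P, ~~ ((x < z) && (z < y))].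

(* A (saturated) chain is represented by the full list of its elements
   x_0 :: x_1 :: ... :: x_l.  Maximal chains of [x,y]: *)
Definition mchain (x y : P) (c : seq P) : bool :=
  match c with
  | [::] => false
  | x' :: s => [&& x' == x, path cover x' s & last x' s == y]
  end.

Definition pmaxchain (c : seq P) : bool :=
  match c with
  | [::] => false
  | x' :: s => [&& x' == \bot, path cover x' s &
                   [forall z : P, ~~ (last x' s < z)]]
  end.

Definition graded : Prop :=
  forall c1 c2, pmaxchain c1 -> pmaxchain c2 -> size c1 = size c2.

Variable lam : P -> P -> L.

Definition labels (c : seq P) : seq L :=
  match c with [::] => [::] | x :: s => pairmap lam x s end.

Definition increasing (c : seq P) : bool := sorted (fun a b => a < b) (labels c).

Definition elt (c : seq P) (i : nat) : P := nth \bot c i.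

(* ascent at rank position i (1 <= i <= l-1) *)
Definition ascent (c : seq P) (i : nat) : bool :=
  [&& 0 < i, i.+1 < size c &
      lam (elt c i.-1) (elt c i) < lam (elt c i) (elt c i.+1)].

Definition ascent_free (c : seq P) : Prop := forall i, ~~ ascent c i.

Definition ER_labeling : Prop :=
  forall x y : P, x <= y -> exists! c, mchain x y c /\ increasing c.

Definition rank_two_switching : Prop :=
  forall s : seq P, path cover \bot s ->
  forall i, ascent (\bot :: s) i ->
  let c := \bot :: s in
  exists! z : P, cover (elt c i.-1) z /\ cover z (elt c i.+1) /\
    lam (elt c i.-1) z = lam (elt c i) (elt c i.+1) /\
    lam z (elt c i.+1) = lam (elt c i.-1) (elt c i).

Definition U (c : seq P) (i : nat) : seq P :=
  if ascent c i then
    match [pick z | [&& cover (elt c i.-1) z, cover z (elt c i.+1),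
                        lam (elt c i.-1) z == lam (elt c i) (elt c i.+1) &
                        lam z (elt c i.+1) == lam (elt c i.-1) (elt c i)]] with
    | Some z => set_nth \bot c i z
    | None => c
    end
  else c.

Definition braid_relation : Prop :=
  forall (x y : P) (c : seq P) (i : nat), mchain x y c ->
    ascent c i -> ascent c i.+1 ->
    U (U (U c i) i.+1) i = U (U (U c i.+1) i) i.+1.

Definition Gedge (x y : P) (c c' : seq P) : Prop :=
  mchain x y c /\ mchain x y c' /\ exists i, c' = U c i /\ c' <> c.

Definition Gconn (x y : P) : relation (seq P) := clos_refl_sym_trans _ (Gedge x y).

Definition Gsink (x y : P) (c : seq P) : Prop :=
  mchain x y c /\ forall c', ~ Gedge x y c c'.

End Labelings.

From Pilot Require Import Defs.
From mathcomp Require Import all_boot all_order zify.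
From Stdlib Require Import Relations Classical.
Set Implicit Arguments. Unset Strict Implicit. Unset Printing Implicit Defensive.
Import Order.TTheory.
Local Open Scope order_scope.

(* Each exchange U_i turns an ascent of the label word into a descent and so
   raises its number of inversions by one: G_[x,y] has no infinite directed
   path.  Exchanges at positions at distance at least two commute, and at
   adjacent positions they are joined by the braid relation, so G_[x,y] is
   locally confluent.  By Newman's lemma every maximal chain reaches a unique
   sink, the same one for all chains of a connected component.  Sinks are
   exactly the ascent-free chains, because the rank two switching property
   (applied after extending the chain down to \hat0) provides an exchange at
   every ascent. *)

Section Newman.
Variables (T : Type) (R : relation T) (m : T -> nat).
Hypothesis R_decr : forall a b, R a b -> (m b < m a)%N.

Local Notation Rs := (clos_refl_trans T R).

Definition normal (a : T) : Prop := forall b, ~ R a b.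

Lemma rt_refl_or_step a n : Rs a n -> a = n \/ exists2 b, R a b & Rs b n.
Proof.
move/(clos_rt_rt1n T R); case=> [|b n' ab bn]; first by left.
by right; exists b => //; apply: clos_rt1n_rt.
Qed.

Lemma normal_form_exists a : exists2 n, Rs a n & normal n.
Proof.
have [k] := ubnP (m a); elim: k a => // k IH a; rewrite ltnS => lt_a.
case: (classic (exists b, R a b)) => [[b ab] | irreducible].
  have [n bn nn] := IH b (leq_trans (R_decr ab) lt_a).
  by exists n => //; apply: rt_trans (rt_step _ _ _ _ ab) bn.
by exists a; [apply: rt_refl | move=> b ab; apply: irreducible; exists b].
Qed.

Hypothesis R_local_confl :
  forall a b1 b2, R a b1 -> R a b2 -> exists2 e, Rs b1 e & Rs b2 e.

Lemma normal_form_unique a n1 n2 :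
  Rs a n1 -> normal n1 -> Rs a n2 -> normal n2 -> n1 = n2.
Proof.
have [k] := ubnP (m a); elim: k a n1 n2 => // k IH a n1 n2; rewrite ltnS => lt_a.
move=> /rt_refl_or_step [<- | [b1 ab1 b1n1]] nf1;
  move=> /rt_refl_or_step [<- | [b2 ab2 b2n2]] nf2 //.
- by case: (nf1 _ ab2).
- by case: (nf2 _ ab1).
have [e b1e b2e] := R_local_confl ab1 ab2.
have [n en nn] := normal_form_exists e.
have [ab1' ab2'] := (leq_trans (R_decr ab1) lt_a, leq_trans (R_decr ab2) lt_a).
rewrite (IH b1 n1 n ab1' b1n1 nf1 (rt_trans _ _ _ _ _ b1e en) nn).
by rewrite (IH b2 n2 n ab2' b2n2 nf2 (rt_trans _ _ _ _ _ b2e en) nn).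
Qed.

Lemma normal_form_conn a b n1 n2 : clos_refl_sym_trans T R a b ->
  Rs a n1 -> normal n1 -> Rs b n2 -> normal n2 -> n1 = n2.
Proof.
move=> ab; elim: ab n1 n2 => {a b} [a b ab | a | a b _ IH | a b c _ IH1 _ IH2]
  n1 n2.
- move=> an1 nf1 bn2; apply: normal_form_unique an1 nf1 _.
  exact: rt_trans _ _ _ _ _ (rt_step _ _ _ _ ab) bn2.
- exact: normal_form_unique.
- by move=> an1 nf1 bn2 nf2; symmetry; apply: IH.
- move=> an1 nf1 cn2 nf2; have [n bn nn] := normal_form_exists b.
  by rewrite (IH1 _ _ an1 nf1 bn nn) (IH2 _ _ bn nn cn2 nf2).
Qed.

End Newman.

Section Inversions.
Context {d : Order.disp_t} {L : porderType d}.

Fixpoint inversions (w : seq L) : nat :=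
  if w is a :: w' then (count (< a) w' + inversions w')%N else 0%N.

Lemma inversions_swap (u : seq L) (a b : L) (v : seq L) : a < b ->
  inversions (u ++ [:: b, a & v]) = (inversions (u ++ [:: a, b & v])).+1.
Proof.
move=> ab; elim: u => [|x u IH] /=; first by rewrite ab (lt_gtF ab) /=; lia.
by rewrite IH !count_cat /=; lia.
Qed.

Lemma inversions_le (w : seq L) : (inversions w <= size w * size w)%N.
Proof.
elim: w => //= a w IH; apply: leq_trans (leq_add (count_size _ w) IH) _; nia.
Qed.

End Inversions.

Section FiniteChains.
Context {d : Order.disp_t} {P : finBPOrderType d}.

Lemma card_lt_below (a b : P) : a < b ->
  (#|[pred t : P | (t < a)%O]| < #|[pred t : P | (t < b)%O]|)%N.
Proof.
move=> ab; apply: proper_card; apply/properP; split.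
  by apply/subsetP => t; rewrite !inE => ta; apply: lt_trans ta ab.
by exists a; rewrite !inE ?ab ?ltxx.
Qed.

Lemma exists_lower_cover (a b : P) : a < b -> exists z, Defs.cover z b.
Proof.
move=> ab; case: (@arg_maxnP _ a (< b) (fun t => #|[pred u : P | u < t]|) ab).
move=> z zb zmax; exists z; rewrite /Defs.cover [z < b]zb; apply/forallP => w.
apply/negP => /andP [zw wb].
by have := leq_trans (card_lt_below zw) (zmax w wb); rewrite ltnn.
Qed.

Lemma chain_from_bot (x : P) :
  exists2 s, path Defs.cover \bot s & last \bot s = x.
Proof.
have [n] := ubnP #|[pred t : P | (t < x)%O]|; elim: n x => // n IH x.
rewrite ltnS => lt_x; have [-> | nx] := eqVneq x \bot; first by exists [::].
have bx : \bot < x by rewrite lt0x.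
have [z /[dup] czx /andP [zx _]] := exists_lower_cover bx.
have [s ps sz] := IH z (leq_trans (card_lt_below zx) lt_x).
by exists (rcons s x); rewrite ?rcons_path ?ps ?sz ?czx ?last_rcons.
Qed.

End FiniteChains.

Section Windows.
Context {T : Type} (x0 : T).
Variables (c : seq T) (i : nat).
Hypotheses (i_gt0 : (0 < i)%N) (i_lt : (i.+1 < size c)%N).

Lemma drop_window :
  drop i.-1 c = [:: nth x0 c i.-1, nth x0 c i, nth x0 c i.+1 & drop i.+2 c].
Proof.
have lti : (i < size c)%N := ltnW i_lt.
rewrite (drop_nth x0); last exact: leq_ltn_trans (leq_pred i) lti.
by rewrite prednK // (drop_nth x0) // (drop_nth x0).
Qed.

Lemma set_nth_window z : set_nth x0 c i z =
  take i.-1 c ++ [:: nth x0 c i.-1, z, nth x0 c i.+1 & drop i.+2 c].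
Proof.
have lti : (i < size c)%N := ltnW i_lt.
rewrite set_nthE lti -{1}(prednK i_gt0) (take_nth x0).
  by rewrite cat_rcons (drop_nth x0).
exact: leq_ltn_trans (leq_pred i) lti.
Qed.

Lemma seq_window :
  c = take i.-1 c ++ [:: nth x0 c i.-1, nth x0 c i, nth x0 c i.+1 & drop i.+2 c].
Proof. by rewrite -drop_window cat_take_drop. Qed.

End Windows.

Section Exchanges.
Context {d : Order.disp_t} {P : finBPOrderType d}.
Context {dL : Order.disp_t} {L : porderType dL}.
Variable lam : P -> P -> L.

Definition exchange (c : seq P) (i : nat) : option P :=
  if ascent lam c i then
    [pick z | [&& Defs.cover (elt c i.-1) z, Defs.cover z (elt c i.+1),
                  lam (elt c i.-1) z == lam (elt c i) (elt c i.+1) &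
                  lam z (elt c i.+1) == lam (elt c i.-1) (elt c i)]]
  else None.

Lemma U_exchange c i :
  U lam c i = if exchange c i is Some z then set_nth \bot c i z else c.
Proof. by rewrite /U /exchange; case: ifP. Qed.

Lemma ascentE c i : ascent lam c i =
  [&& (0 < i)%N, (i.+1 < size c)%N &
      lam (elt c i.-1) (elt c i) < lam (elt c i) (elt c i.+1)].
Proof. by rewrite /ascent !ltEnat. Qed.

Lemma exchangeP c i z : exchange c i = Some z ->
  [/\ ascent lam c i, Defs.cover (elt c i.-1) z, Defs.cover z (elt c i.+1),
      lam (elt c i.-1) z = lam (elt c i) (elt c i.+1) &
      lam z (elt c i.+1) = lam (elt c i.-1) (elt c i)].
Proof.
rewrite /exchange; case: ifP => // asc; case: pickP => // z'.
by case/and4P=> c1 c2 /eqP l1 /eqP l2 [<-].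
Qed.

Lemma U_neq c i z : exchange c i = Some z -> U lam c i <> c.
Proof.
move=> /[dup] /exchangeP [asc _ _ l1 _]; rewrite U_exchange => ->.
move=> /(congr1 (nth \bot ^~ i)); rewrite nth_set_nth /= eqxx => zi.
by move: asc; rewrite ascentE -l1 -[elt c i]zi ltxx !andbF.
Qed.

Lemma U_neqP c i : U lam c i <> c ->
  exists2 z, exchange c i = Some z & U lam c i = set_nth \bot c i z.
Proof. by rewrite U_exchange; case: (exchange c i) => // z; exists z. Qed.

Lemma ascent_of_U_neq c i : U lam c i <> c -> ascent lam c i.
Proof. by case/U_neqP => z /exchangeP []. Qed.

Lemma labels_window (p : seq P) u v w q :
  labels lam (p ++ [:: u, v, w & q]) =
  labels lam (rcons p u) ++ [:: lam u v, lam v w & labels lam (w :: q)].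
Proof. by case: p => [|a p] //=; rewrite -cats1 !pairmap_cat -catA. Qed.

Lemma size_labels c : size (labels lam c) = (size c).-1.
Proof. by case: c => //= a s; rewrite size_pairmap. Qed.

Lemma size_U c i : size (U lam c i) = size c.
Proof.
have [-> // | /eqP /U_neqP [z /exchangeP [asc _ _ _ _] ->]] :=
  eqVneq (U lam c i) c.
by move: asc; rewrite ascentE size_set_nth => /and3P [_ /ltnW /maxn_idPr -> _].
Qed.

Lemma inversions_U c i : U lam c i <> c ->
  inversions (labels lam (U lam c i)) = (inversions (labels lam c)).+1.
Proof.
case/U_neqP => z /exchangeP [asc _ _ l1 l2] ->.
move: asc; rewrite ascentE => /and3P [i0 ic lt].
rewrite (set_nth_window _ i0 ic) [in RHS](seq_window \bot i0 ic) !labels_window.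
by rewrite l1 l2 inversions_swap.
Qed.

Definition chain_measure (c : seq P) : nat :=
  (size c * size c - inversions (labels lam c))%N.

Lemma chain_measure_U c i : U lam c i <> c ->
  (chain_measure (U lam c i) < chain_measure c)%N.
Proof.
move=> ne; rewrite /chain_measure size_U.
have := inversions_le (labels lam (U lam c i)).
by rewrite inversions_U // size_labels size_U; nia.
Qed.

Lemma mchain_window x y (p : seq P) u v w q z :
  mchain x y (p ++ [:: u, v, w & q]) -> Defs.cover u z -> Defs.cover z w ->
  mchain x y (p ++ [:: u, z, w & q]).
Proof.
case: p => [|a p] /=; rewrite ?cat_path ?last_cat /=.
  by case/and3P => -> /and3P [_ _ ->] -> -> ->.
by case/and3P => -> /andP [-> /and4P [-> _ _ ->]] -> -> ->.
Qed.

Lemma mchain_U x y c i : mchain x y c -> mchain x y (U lam c i).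
Proof.
have [-> // | /eqP /U_neqP [z /exchangeP [asc c1 c2 _ _] ->]] :=
  eqVneq (U lam c i) c.
move: asc; rewrite ascentE => /and3P [i0 ic _].
rewrite (set_nth_window _ i0 ic) {1}(seq_window \bot i0 ic).
by move/mchain_window; apply.
Qed.

Lemma exchange_set_nth_far c i j z : (i < size c)%N ->
  (i.+1 < j)%N || (j.+1 < i)%N -> exchange (set_nth \bot c i z) j = exchange c j.
Proof.
move=> ic far; rewrite /exchange /ascent /elt size_set_nth (maxn_idPr ic).
have [ne1 ne2 ne3] : [/\ j.-1 != i, j != i & j.+1 != i] by split; apply/eqP; lia.
by rewrite !nth_set_nth /= (negbTE ne1) (negbTE ne2) (negbTE ne3).
Qed.

Lemma U_commute c i j : (i.+1 < j)%N ->
  U lam (U lam c i) j = U lam (U lam c j) i.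
Proof.
move=> ij; have far_ij : (i.+1 < j)%N || (j.+1 < i)%N by rewrite ij.
have far_ji : (j.+1 < i)%N || (i.+1 < j)%N by rewrite ij orbT.
have size_of k zk : exchange c k = Some zk -> (k < size c)%N.
  by case/exchangeP; rewrite ascentE => /and3P [_ /ltnW ? _].
rewrite [U lam c i]U_exchange [U lam c j]U_exchange.
case Ei: (exchange c i) => [zi|]; case Ej: (exchange c j) => [zj|].
- have ic := size_of _ _ Ei; have jc := size_of _ _ Ej.
  rewrite !U_exchange !exchange_set_nth_far // Ei Ej set_set_nth ifN //.
  by apply/eqP; lia.
- by rewrite !U_exchange exchange_set_nth_far ?Ei ?Ej // (size_of _ _ Ei).
- by rewrite !U_exchange exchange_set_nth_far ?Ei ?Ej // (size_of _ _ Ej).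
- by rewrite !U_exchange Ei Ej.
Qed.

Lemma elt_cat (p c : seq P) k : elt (p ++ c) (k + size p) = elt c k.
Proof. by rewrite /elt nth_cat ltnNge leq_addl addnK. Qed.

Lemma ascent_cat p c i : (0 < i)%N ->
  ascent lam (p ++ c) (i + size p) = ascent lam c i.
Proof.
move=> i0; have predE : (i + size p).-1 = i.-1 + size p.
  by rewrite -{1}(prednK i0) addSn.
rewrite !ascentE predE -addSn !elt_cat size_cat [size p + _]addnC ltn_add2r.
by rewrite addn_gt0 i0.
Qed.

Lemma exchange_cat p c i : (0 < i)%N ->
  exchange (p ++ c) (i + size p) = exchange c i.
Proof.
move=> i0; have predE : (i + size p).-1 = i.-1 + size p.
  by rewrite -{1}(prednK i0) addSn.
by rewrite /exchange ascent_cat // predE -addSn !elt_cat.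
Qed.

Lemma exchange_from_bot s i : rank_two_switching lam ->
  path Defs.cover \bot s -> ascent lam (\bot :: s) i ->
  exchange (\bot :: s) i <> None.
Proof.
move=> sw ps asc; have [z [[c1 [c2 [l1 l2]]] _]] := sw s ps i asc.
by rewrite /exchange asc; case: pickP => // /(_ z); rewrite c1 c2 l1 l2 !eqxx.
Qed.

(* The switching property is only postulated for chains starting at \bot. *)
Lemma exchange_of_ascent x y c i : rank_two_switching lam ->
  mchain x y c -> ascent lam c i -> exchange c i <> None.
Proof.
case: c => [//|a s] sw /and3P [/eqP -> ps _] asc.
have [s0 ps0 ls0] := chain_from_bot x.
have i0 : (0 < i)%N by move: asc; rewrite ascentE => /andP [].
have E : belast \bot s0 ++ x :: s = \bot :: (s0 ++ s).
  by rewrite -ls0 -cat_rcons -lastI.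
rewrite -(exchange_cat (belast \bot s0) _ i0) E; apply: exchange_from_bot => //.
  by rewrite cat_path ps0 ls0 ps.
by rewrite -E ascent_cat.
Qed.

Variables x y : P.

Local Notation Rs := (clos_refl_trans _ (Gedge lam x y)).

Lemma Gedge_measure c c' : Gedge lam x y c c' ->
  (chain_measure c' < chain_measure c)%N.
Proof. by case=> _ [_ [i [-> ne]]]; apply: chain_measure_U. Qed.

Lemma rt_U c i : mchain x y c -> Rs c (U lam c i).
Proof.
move=> mc; have [-> | ne] := eqVneq (U lam c i) c; first exact: rt_refl.
apply: rt_step; do !split => //; first exact: mchain_U.
by exists i; split => //; apply/eqP.
Qed.

Lemma rt_UU c i j : mchain x y c -> Rs c (U lam (U lam c i) j).
Proof.
by move=> mc; apply: rt_trans _ _ _ _ _ (rt_U i mc) (rt_U j (mchain_U i mc)).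
Qed.

Lemma rt_mchain c c' : Rs c c' -> mchain x y c -> mchain x y c'.
Proof. by elim=> // [a b [_ []] | a b e _ IH1 _ IH2] // /IH1 /IH2. Qed.

Lemma ascent_free_normal c : ascent_free lam c -> normal (Gedge lam x y) c.
Proof. by move=> af c' [_ [_ [i [-> ]]]]; rewrite /U (negbTE (af i)). Qed.

Lemma normal_ascent_free c : rank_two_switching lam ->
  mchain x y c -> normal (Gedge lam x y) c -> ascent_free lam c.
Proof.
move=> sw mc nc i; apply/negP => asc.
case E: (exchange c i) => [z|]; last exact: exchange_of_ascent sw mc asc E.
apply: (nc (U lam c i)); do !split => //; first exact: mchain_U.
by exists i; split => //; apply: U_neq E.
Qed.

Hypothesis braid : braid_relation lam.

Lemma U_joinable c i j : mchain x y c -> (i < j)%N ->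
  U lam c i <> c -> U lam c j <> c ->
  exists2 e, Rs (U lam c i) e & Rs (U lam c j) e.
Proof.
move=> mc; rewrite leq_eqVlt => /predU1P [<- | far] ni nj.
  exists (U lam (U lam (U lam c i) i.+1) i); first exact: rt_UU (mchain_U i mc).
  rewrite (braid mc (ascent_of_U_neq ni) (ascent_of_U_neq nj)).
  exact: rt_UU (mchain_U _ mc).
exists (U lam (U lam c i) j); first exact: rt_U (mchain_U i mc).
by rewrite U_commute //; apply: rt_U (mchain_U j mc).
Qed.

Lemma Gedge_local_confluence c c1 c2 :
  Gedge lam x y c c1 -> Gedge lam x y c c2 -> exists2 e, Rs c1 e & Rs c2 e.
Proof.
case=> mc [_ [i [-> ni]]] [_ [_ [j [-> nj]]]].
have [ij | ji | <-] := ltngtP i j.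
- exact: U_joinable.
- by have [e ? ?] := U_joinable mc ji nj ni; exists e.
- by exists (U lam c i); apply: rt_refl.
Qed.

End Exchanges.

Theorem corollary3p13 (d : Order.disp_t) (P : finBPOrderType d)
  (dL : Order.disp_t) (L : porderType dL) (lam : P -> P -> L) :
  @graded d P ->
  ER_labeling lam -> rank_two_switching lam -> braid_relation lam ->
  forall (x y : P) (c : seq P), mchain x y c ->
    (exists! s, mchain x y s /\ Gconn lam x y c s /\ Gsink lam x y s) /\
    (exists! s, mchain x y s /\ Gconn lam x y c s /\ ascent_free lam s).
Proof.
move=> _ _ sw braid x y c mc.
have decr := @Gedge_measure _ _ _ _ lam x y.
have confl := Gedge_local_confluence braid (x := x) (y := y).
have [n cn nn] := normal_form_exists decr c.
have mn := rt_mchain cn mc.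
have cn' : Gconn lam x y c n by apply: clos_rt_clos_rst.
have normal_eq s : Gconn lam x y c s -> normal (Gedge lam x y) s -> n = s.
  move=> cs ns; apply: (normal_form_conn decr confl cs cn nn _ ns).
  exact: rt_refl.
split; exists n; split.
- by do !split.
- by move=> s [_ [cs [_ ns]]]; apply: normal_eq.
- by do !split => //; apply: normal_ascent_free sw mn nn.
- by move=> s [_ [cs /ascent_free_normal ns]]; apply: normal_eq.
Qed.
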